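(* Let $\Delta(v)=\alpha v+\beta$ with $\alpha,\beta\in\mathbb{R}$ such that $\Delta(v)>0$ for all $v\in[0,1]$, and let $u:[0,1]\to[0,1]$ be the power-law schedule with exponent $p=3/2$: $u(0)=0$, $u(1)=1$, $u'(s)=c\,\Delta^{3/2}(u(s))$ with $c=\int_0^1\Delta^{-3/2}(v)\,dv$. Then $\mathrm{sgn}(u'')$ is constant on $[0,1]$ and $u$ satisfies the Euler–Lagrange equation of $\mathcal{L}_1(s,u,p,q)=|q|/\Delta^2(u)$, namely for all $s\in[0,1]$ $$-\frac{2|u''(s)|\,\Delta'(u(s))}{\Delta^3(u(s))}+\frac{d^2}{ds^2}\left(\frac{\mathrm{sgn}(u''(s))}{\Delta^2(u(s))}\right)=0 .$$
   Context: $\mathrm{sgn}$ denotes the sign function with $\mathrm{sgn}(0)=0$; $\Delta'=d\Delta/dv$. The equation displayed is $\frac{\partial\mathcal{L}_1}{\partial u}-\frac{d}{ds}\frac{\partial \mathcal{L}_1}{\partial p}+\frac{d^2}{ds^2}\frac{\partial\mathcal{L}_1}{\partial q}=0$ evaluated along $(s,u(s),u'(s),u''(s))$, with $\partial|q|/\partial q=\mathrm{sgn}(q)$. *)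

From Stdlib Require Import Reals.
From Coquelicot Require Import Coquelicot.
Open Scope R_scope.

Definition DeltaL (alpha beta v : R) : R := alpha * v + beta.

Definition sgn (x : R) : R :=
  if Rlt_dec 0 x then 1 else if Rlt_dec x 0 then -1 else 0.

Definition I01 (x : R) : Prop := 0 <= x <= 1.

(* f has derivative l at x relative to the domain [0,1]
   (one-sided at the endpoints 0 and 1). *)
Definition deriv01 (f : R -> R) (x l : R) : Prop :=
  filterlim (fun y => (f y - f x) / (y - x))
    (within (fun y => I01 y /\ y <> x) (locally x)) (locally l).

Definition c_const (alpha beta : R) : R :=
  RInt (fun v => Rpower (DeltaL alpha beta v) (-(3/2))) 0 1.

(* Along u' = c Delta^(3/2)(u), the chain rule gives for every exponent p
   (Delta^p(u))' = p alpha c Delta^(p+1/2)(u).  With p = 3/2 this yields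
   u'' = (3/2) alpha c^2 Delta^2(u), whose sign is that of the constant
   (3/2) alpha c^2.  Hence sgn(u'')/Delta^2(u) = k Delta^(-2)(u) with k constant,
   and two more applications (p = -2, then p = -3/2) give its second derivative
   3 k alpha^2 c^2 / Delta(u), which equals 2 |u''| alpha / Delta^3(u) because
   k * (3/2) alpha c^2 = |(3/2) alpha c^2|. *)

From Stdlib Require Import Reals Lra Psatz.
From Coquelicot Require Import Coquelicot.
Open Scope R_scope.

Lemma deriv01_eps_delta f x l :
  deriv01 f x l <->
  forall eps, 0 < eps -> exists delta, 0 < delta /\
    forall y, I01 y -> y <> x -> Rabs (y - x) < delta ->
      Rabs ((f y - f x) / (y - x) - l) < eps.
Proof.
split.
- intros H eps Heps.
  destruct (H (fun z => Rabs (z - l) < eps)) as [delta Hdelta].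
  { exists (mkposreal eps Heps). intros z Hz. exact Hz. }
  exists delta. split; [apply cond_pos|].
  intros y Hy Hyx Hyd. apply Hdelta; [exact Hyd | split; assumption].
- intros H P [eps Heps].
  destruct (H eps (cond_pos eps)) as [delta [Hdelta Hclose]].
  exists (mkposreal delta Hdelta). intros y Hyd [Hy Hyx].
  apply Heps, Hclose; assumption.
Qed.

Lemma deriv01_ext f g x l :
  (forall y, I01 y -> f y = g y) -> I01 x -> deriv01 f x l -> deriv01 g x l.
Proof.
intros Hfg Hx Hf. unfold deriv01 in *.
refine (filterlim_ext_loc _ _ _ Hf).
exists (mkposreal 1 Rlt_0_1). intros y _ [Hy _]. rewrite !Hfg; auto.
Qed.

Lemma deriv01_increment_bound u x l :
  deriv01 u x l -> exists delta, 0 < delta /\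
    forall y, I01 y -> Rabs (y - x) < delta ->
      Rabs (u y - u x) <= (Rabs l + 1) * Rabs (y - x).
Proof.
intros Hu. destruct (proj1 (deriv01_eps_delta _ _ _) Hu 1 Rlt_0_1) as [delta [Hdelta H]].
exists delta. split; [exact Hdelta|]. intros y Hy Hyd.
destruct (Req_dec y x) as [-> | Hyx].
- rewrite !Rminus_diag, Rabs_R0. lra.
- specialize (H y Hy Hyx Hyd).
  assert (Hh : 0 < Rabs (y - x)) by (apply Rabs_pos_lt; lra).
  replace (u y - u x) with ((u y - u x) / (y - x) * (y - x)) by (field; lra).
  rewrite Rabs_mult. apply Rmult_le_compat_r; [lra|].
  pose proof (Rabs_triang_inv ((u y - u x) / (y - x)) l). lra.
Qed.

Lemma derivable_pt_lim_increment F a d :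
  derivable_pt_lim F a d -> forall eps, 0 < eps -> exists delta, 0 < delta /\
    forall h, Rabs h < delta -> Rabs (F (a + h) - F a - d * h) <= eps * Rabs h.
Proof.
intros HF eps Heps. destruct (HF eps Heps) as [delta Hdelta].
exists delta. split; [apply cond_pos|]. intros h Hh.
destruct (Req_dec h 0) as [-> | Hh0].
- rewrite Rplus_0_r, Rabs_R0. replace (F a - F a - d * 0) with 0 by ring.
  rewrite Rabs_R0. lra.
- specialize (Hdelta h Hh0 Hh).
  replace (F (a + h) - F a - d * h) with (((F (a + h) - F a) / h - d) * h)
    by (field; exact Hh0).
  rewrite Rabs_mult. apply Rmult_le_compat_r; [apply Rabs_pos | lra].
Qed.

Lemma deriv01_comp u F x l d :
  deriv01 u x l -> derivable_pt_lim F (u x) d ->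
  deriv01 (fun r => F (u r)) x (d * l).
Proof.
intros Hu HF. apply deriv01_eps_delta. intros eps Heps.
(* With k = u y - u x = O(y - x), split the error as
   (F(u y) - F(u x) - d k)/(y - x) + d (k/(y - x) - l); no division by k is needed. *)
set (L := Rabs l + 1).
pose proof (Rabs_pos l) as Hl. pose proof (Rabs_pos d) as Hd.
assert (HL : 0 < L) by (unfold L; lra).
destruct (deriv01_increment_bound _ _ _ Hu) as [d1 [Hd1 Hlip]].
destruct (derivable_pt_lim_increment _ _ _ HF (eps / (2 * L))) as [d2 [Hd2 HFinc]].
{ apply Rdiv_lt_0_compat; lra. }
destruct (proj1 (deriv01_eps_delta _ _ _) Hu (eps / (2 * (Rabs d + 1))))
  as [d3 [Hd3 Hq]].
{ apply Rdiv_lt_0_compat; lra. }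
exists (Rmin d1 (Rmin (d2 / L) d3)). split.
{ repeat apply Rmin_pos; try apply Rdiv_lt_0_compat; lra. }
intros y Hy Hyx Hyd.
pose proof (Rmin_l d1 (Rmin (d2 / L) d3)) as Hm1.
pose proof (Rmin_r d1 (Rmin (d2 / L) d3)) as Hm.
pose proof (Rmin_l (d2 / L) d3) as Hm2. pose proof (Rmin_r (d2 / L) d3) as Hm3.
assert (Hh : 0 < Rabs (y - x)) by (apply Rabs_pos_lt; lra).
specialize (Hlip y Hy ltac:(lra)). specialize (Hq y Hy Hyx ltac:(lra)).
set (k := u y - u x) in *.
assert (Hk : Rabs k < d2).
{ apply Rle_lt_trans with (L * Rabs (y - x)); [exact Hlip|].
  replace d2 with (L * (d2 / L)) by (field; lra).
  apply Rmult_lt_compat_l; lra. }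
specialize (HFinc k Hk). replace (u x + k) with (u y) in HFinc by (unfold k; ring).
replace ((F (u y) - F (u x)) / (y - x) - d * l)
  with ((F (u y) - F (u x) - d * k) / (y - x) + d * (k / (y - x) - l))
  by (unfold k; field; lra).
eapply Rle_lt_trans; [apply Rabs_triang|].
rewrite Rabs_div, Rabs_mult by lra.
assert (Hfirst : Rabs (F (u y) - F (u x) - d * k) / Rabs (y - x) <= eps / 2).
{ apply Rmult_le_reg_r with (Rabs (y - x)); [exact Hh|].
  unfold Rdiv at 1. rewrite Rmult_assoc, Rinv_l, Rmult_1_r by lra.
  apply Rle_trans with (eps / (2 * L) * (L * Rabs (y - x))).
  - apply Rle_trans with (eps / (2 * L) * Rabs k); [exact HFinc|].
    apply Rmult_le_compat_l; [|exact Hlip].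
    apply Rlt_le, Rdiv_lt_0_compat; lra.
  - right. field. lra. }
assert (Hsecond : Rabs d * Rabs (k / (y - x) - l) < eps / 2).
{ apply Rle_lt_trans with (Rabs d * (eps / (2 * (Rabs d + 1)))).
  - apply Rmult_le_compat_l; lra.
  - apply Rmult_lt_reg_r with (2 * (Rabs d + 1)); [lra|].
    replace (Rabs d * (eps / (2 * (Rabs d + 1))) * (2 * (Rabs d + 1)))
      with (Rabs d * eps) by (field; lra).
    nra. }
lra.
Qed.

Lemma derivable_pt_lim_scal_Rpower_affine alpha beta K p v :
  0 < DeltaL alpha beta v ->
  derivable_pt_lim (fun w => K * Rpower (DeltaL alpha beta w) p) v
    (K * (p * Rpower (DeltaL alpha beta v) (p - 1) * alpha)).
Proof.
intros Hv. unfold DeltaL in *.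
pose proof (derivable_pt_lim_power _ p Hv) as Hpow.
apply is_derive_Reals in Hpow.
apply is_derive_Reals. auto_derive.
- eexists; exact Hpow.
- rewrite (is_derive_unique _ _ _ Hpow). ring.
Qed.

Lemma deriv01_Rpower_schedule alpha beta c u u1 K p s :
  0 < DeltaL alpha beta (u s) -> deriv01 u s (u1 s) ->
  u1 s = c * Rpower (DeltaL alpha beta (u s)) (3/2) ->
  deriv01 (fun r => K * Rpower (DeltaL alpha beta (u r)) p) s
    (K * p * alpha * c * Rpower (DeltaL alpha beta (u s)) (p + 1/2)).
Proof.
intros Hpos Hu Hu1.
replace (K * p * alpha * c * Rpower (DeltaL alpha beta (u s)) (p + 1/2))
  with (K * (p * Rpower (DeltaL alpha beta (u s)) (p - 1) * alpha) * u1 s).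
- apply (deriv01_comp u (fun w => K * Rpower (DeltaL alpha beta w) p)); [exact Hu|].
  apply derivable_pt_lim_scal_Rpower_affine; exact Hpos.
- rewrite Hu1. replace (p + 1/2) with ((p - 1) + 3/2) by field.
  rewrite Rpower_plus. ring.
Qed.

Lemma sgn_mul_pos a b : 0 < b -> sgn (a * b) = sgn a.
Proof.
intros Hb. unfold sgn.
destruct (Rlt_dec 0 (a * b)), (Rlt_dec 0 a); try reflexivity; try (exfalso; nra).
destruct (Rlt_dec (a * b) 0), (Rlt_dec a 0); try reflexivity; exfalso; nra.
Qed.

Lemma sgn_mul_self a : sgn a * a = Rabs a.
Proof.
unfold sgn. destruct (Rlt_dec 0 a); [rewrite Rabs_pos_eq; lra|].
destruct (Rlt_dec a 0); [rewrite Rabs_left; lra|].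
replace a with 0 by lra. rewrite Rabs_R0. ring.
Qed.

Lemma Rpower_two x : 0 < x -> Rpower x 2 = x ^ 2.
Proof. intros Hx. replace 2 with (INR 2) by (simpl; ring). exact (Rpower_pow 2 x Hx). Qed.

Section PowerLawSchedule.

Variables (alpha beta : R) (u u1 : R -> R).

Hypothesis Delta_u_pos : forall s, I01 s -> 0 < DeltaL alpha beta (u s).
Hypothesis u_deriv : forall s, I01 s -> deriv01 u s (u1 s).
Hypothesis u1_eq : forall s, I01 s ->
  u1 s = c_const alpha beta * Rpower (DeltaL alpha beta (u s)) (3/2).

Definition accel_coef : R := c_const alpha beta * (3/2) * alpha * c_const alpha beta.

Definition accel (s : R) : R := accel_coef * DeltaL alpha beta (u s) ^ 2.

Definition weight_deriv (s : R) : R :=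
  sgn accel_coef * (-2) * alpha * c_const alpha beta
  * Rpower (DeltaL alpha beta (u s)) (-2 + 1/2).

Definition weight_deriv2 (s : R) : R :=
  sgn accel_coef * (-2) * alpha * c_const alpha beta * (-2 + 1/2) * alpha
  * c_const alpha beta * Rpower (DeltaL alpha beta (u s)) (-2 + 1/2 + 1/2).

Lemma deriv01_u1_accel s : I01 s -> deriv01 u1 s (accel s).
Proof.
intros Hs.
apply deriv01_ext
  with (f := fun r => c_const alpha beta * Rpower (DeltaL alpha beta (u r)) (3/2));
  [|exact Hs|].
{ intros r Hr. symmetry. apply u1_eq, Hr. }
replace (accel s) with
  (accel_coef * Rpower (DeltaL alpha beta (u s)) (3/2 + 1/2)).
- apply (deriv01_Rpower_schedule alpha beta (c_const alpha beta) u u1); auto.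
- replace (3/2 + 1/2) with 2 by field. rewrite Rpower_two by auto. reflexivity.
Qed.

Lemma sgn_accel s : I01 s -> sgn (accel s) = sgn accel_coef.
Proof. intros Hs. apply sgn_mul_pos, pow_lt, Delta_u_pos, Hs. Qed.

Lemma deriv01_sgn_accel_weight s : I01 s ->
  deriv01 (fun r => sgn (accel r) / DeltaL alpha beta (u r) ^ 2) s (weight_deriv s).
Proof.
intros Hs.
apply deriv01_ext
  with (f := fun r => sgn accel_coef * Rpower (DeltaL alpha beta (u r)) (-2));
  [|exact Hs|].
{ intros r Hr. rewrite sgn_accel by exact Hr.
  replace (-2) with (- (2)) by ring.
  rewrite Rpower_Ropp, Rpower_two by auto. reflexivity. }
apply (deriv01_Rpower_schedule alpha beta (c_const alpha beta) u u1); auto.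
Qed.

Lemma deriv01_weight_deriv s : I01 s -> deriv01 weight_deriv s (weight_deriv2 s).
Proof.
intros Hs. apply (deriv01_Rpower_schedule alpha beta (c_const alpha beta) u u1); auto.
Qed.

Lemma euler_lagrange_accel s : I01 s ->
  - (2 * Rabs (accel s) * alpha) / DeltaL alpha beta (u s) ^ 3 + weight_deriv2 s = 0.
Proof.
intros Hs. pose proof (Delta_u_pos s Hs) as HD.
unfold accel, weight_deriv2.
replace (-2 + 1/2 + 1/2) with (- (1)) by field.
rewrite Rpower_Ropp, Rpower_1, Rabs_mult, (Rabs_pos_eq (_ ^ 2)) by
  (auto || (apply pow_le; lra)).
rewrite <- sgn_mul_self. unfold accel_coef. field. lra.
Qed.

End PowerLawSchedule.

Theorem theorem6 (alpha beta : R) (u u1 : R -> R) :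
  (forall v, I01 v -> 0 < DeltaL alpha beta v) ->
  (forall s, I01 s -> I01 (u s)) ->
  u 0 = 0 -> u 1 = 1 ->
  (forall s, I01 s -> deriv01 u s (u1 s)) ->
  (forall s, I01 s ->
     u1 s = c_const alpha beta * Rpower (DeltaL alpha beta (u s)) (3/2)) ->
  exists u2 : R -> R,
    (forall s, I01 s -> deriv01 u1 s (u2 s)) /\
    (forall s t, I01 s -> I01 t -> sgn (u2 s) = sgn (u2 t)) /\
    exists g1 g2 : R -> R,
      (forall s, I01 s ->
         deriv01 (fun r => sgn (u2 r) / (DeltaL alpha beta (u r)) ^ 2) s (g1 s)) /\
      (forall s, I01 s -> deriv01 g1 s (g2 s)) /\
      (forall s, I01 s ->
         - (2 * Rabs (u2 s) * alpha) / (DeltaL alpha beta (u s)) ^ 3 + g2 s = 0).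
Proof.
intros HD HU _ _ Hu Hu1.
assert (HDu : forall s, I01 s -> 0 < DeltaL alpha beta (u s))
  by (intros s Hs; apply HD, HU, Hs).
exists (accel alpha beta u). split; [|split].
- intros s Hs. exact (deriv01_u1_accel alpha beta u u1 HDu Hu Hu1 s Hs).
- intros s t Hs Ht. rewrite !(sgn_accel alpha beta u HDu); auto.
- exists (weight_deriv alpha beta u), (weight_deriv2 alpha beta u).
  split; [|split]; intros s Hs.
  + exact (deriv01_sgn_accel_weight alpha beta u u1 HDu Hu Hu1 s Hs).
  + exact (deriv01_weight_deriv alpha beta u u1 HDu Hu Hu1 s Hs).
  + exact (euler_lagrange_accel alpha beta u HDu s Hs).
Qed.
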